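(* Let $\tau$ be a signature, $\phi\in SO(\tau)$, $\{\mathcal B_j:j\in J\}$ a family of $\tau$-structures, $\mathcal G$ an ultrafilter on $J$, and $(\mathcal A_\omega,\Upsilon_{\lim})$ the limit-Henkin model formed from $\{\mathcal B_j:j\in J\}$ by an $\omega$-long ultrachain $\langle\mathcal A_n:n\in\omega\rangle$ with $\mathcal A_0=\prod_{j\in J}\mathcal B_j/\mathcal G$. Then $\{j\in J:\mathcal B_j\models\phi\}\in\mathcal G$ if and only if $(\mathcal A_\omega,\Upsilon_{\lim})\models_\lambda\phi$.
   Context: $SO(\tau)$: second-order $\tau$-formulas with relation variables only; $\mathcal B_j\models\phi$ is the standard (full) second-order semantics. Decomposability: if $\mathcal C=\prod_k\mathcal C_k/\mathcal H$, a relation $R\subseteq C^m$ ($m\ge1$) is decomposable if $R=\prod_k R_k/\mathcal H$ for some $R_k\subseteq C_k^m$. For ultrafilters $\mathcal F$ on $I$, $\mathcal G$ on $J$, $X\in\mathcal G\times\mathcal F$ iff $\{i:\{j:(j,i)\in X\}\in\mathcal G\}\in\mathcal F$. An $\omega$-long ultrachain is a sequence $\langle\mathcal A_n:n\in\omega\rangle$ with $\mathcal A_{n+1}={}^{I_n}\mathcal A_n/\mathcal F_n$ for ultrafilters $\mathcal F_n$ on sets $I_n$, each $\mathcal A_n$ identified with its diagonal image so that $\mathcal A_n\subseteq\mathcal A_{n+1}$; its limit is $\mathcal A_\omega=\bigcup_n\mathcal A_n$. With $\mathcal A_0=\prod_j\mathcal B_j/\mathcal G$, $\mathcal A_n$ is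 identified with the ultraproduct of the family $\{\mathcal B_j\}$ (indexed by $J\times I_0\times\dots\times I_{n-1}$) by $\mathcal G\times\mathcal F_0\times\dots\times\mathcal F_{n-1}$; $\Upsilon_n$ is the set of relations on $\mathcal A_n$ decomposable w.r.t. this presentation. $\Upsilon_{\lim}$ is the set of relations $R$ on $\mathcal A_\omega$ for which there are $m$ and $R_m\in\Upsilon_m$ such that, defining $\langle\mathcal A_{k+1},R_{k+1}\rangle={}^{I_k}\langle\mathcal A_k,R_k\rangle/\mathcal F_k$ for $k\ge m$, $R=\bigcup_{k\ge m}R_k$. The pair $(\mathcal A_\omega,\Upsilon_{\lim})$ is the limit-Henkin model. $\models_\lambda$: Henkin semantics in $(\mathcal A_\omega,\Upsilon_{\lim})$, i.e. first-order parts evaluated as usual in the expansion by the assigned relations, second-order quantifiers ranging only over relations in $\Upsilon_{\lim}$ of the appropriate arity, and $\models_\lambda\phi$ meaning truth under all assignments (relation variables assigned values in $\Upsilon_{\lim}$). *)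

From Stdlib Require Import ClassicalEpsilon PeanoNat.
From mathcomp Require Import ssreflect ssrfun ssrbool eqtype ssrnat fintype.

Set Implicit Arguments.
Unset Strict Implicit.
Unset Printing Implicit Defensive.

(** A signature: relation symbols and function symbols (constants are
    function symbols of arity 0), each with an arity. *)
Record signature := Signature {
  rsym : Type; rar : rsym -> nat;
  fsym : Type; far : fsym -> nat }.

(** A tau-structure (nonempty domain, as usual in model theory). *)
Record structure (tau : signature) := Structure {
  dom : Type;
  dom_pt : dom;
  rel_i : forall P : rsym tau, ('I_(rar P) -> dom) -> Prop;
  fun_i : forall f : fsym tau, ('I_(far f) -> dom) -> dom }.

(** A structure presented by representatives modulo an equality relation
    (used for ultraproducts / ultrachain limits, which are quotients). *)
Record sstr (tau : signature) := SStr {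
  scar : Type;
  sequ : scar -> scar -> Prop;
  srel : forall P : rsym tau, ('I_(rar P) -> scar) -> Prop;
  sfun : forall f : fsym tau, ('I_(far f) -> scar) -> scar }.

Definition sstr_of (tau : signature) (M : structure tau) : sstr tau :=
  @SStr tau (dom M) (@eq (dom M)) (@rel_i tau M) (@fun_i tau M).

Inductive term (tau : signature) : Type :=
| TVar (x : nat)
| TFun (f : fsym tau) (args : 'I_(far f) -> term tau).

(** Relation variables are pairs (X, m): name X, arity m.+1 (>= 1). *)
Inductive formula (tau : signature) : Type :=
| FEq (t1 t2 : term tau)
| FRel (P : rsym tau) (args : 'I_(rar P) -> term tau)
| FVar (X m : nat) (args : 'I_m.+1 -> term tau)
| FNot (p : formula tau)
| FAnd (p q : formula tau)
| FOr (p q : formula tau)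
| FImp (p q : formula tau)
| FEx (x : nat) (p : formula tau)
| FAll (x : nat) (p : formula tau)
| FExR (X m : nat) (p : formula tau)
| FAllR (X m : nat) (p : formula tau).

Section Semantics.
Variable tau : signature.
Variable M : sstr tau.

Definition RelT (m : nat) : Type := ('I_m.+1 -> scar M) -> Prop.

(** D m = the admissible relations of arity m.+1. *)
Variable D : forall m, RelT m -> Prop.

Fixpoint teval (rho : nat -> scar M) (t : term tau) : scar M :=
  match t with
  | TVar x => rho x
  | TFun f args => @sfun tau M f (fun l => teval rho (args l))
  end.

Definition upd1 (rho : nat -> scar M) (x : nat) (a : scar M) : nat -> scar M :=
  fun y => if Nat.eqb y x then a else rho y.

Definition updR (sigma : forall m, nat -> RelT m) (m X : nat) (R : RelT m)
  : forall k, nat -> RelT k :=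
  fun k => match Nat.eq_dec m k with
           | left e => fun Y => if Nat.eqb Y X then eq_rect m RelT R k e
                                else sigma k Y
           | right _ => sigma k
           end.

Fixpoint sat (rho : nat -> scar M) (sigma : forall m, nat -> RelT m)
  (phi : formula tau) : Prop :=
  match phi with
  | FEq t1 t2 => @sequ tau M (teval rho t1) (teval rho t2)
  | FRel P args => @srel tau M P (fun l => teval rho (args l))
  | FVar X m args => sigma m X (fun l => teval rho (args l))
  | FNot p => ~ sat rho sigma p
  | FAnd p q => sat rho sigma p /\ sat rho sigma q
  | FOr p q => sat rho sigma p \/ sat rho sigma q
  | FImp p q => sat rho sigma p -> sat rho sigma q
  | FEx x p => exists a : scar M, sat (upd1 rho x a) sigma p
  | FAll x p => forall a : scar M, sat (upd1 rho x a) sigma p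
  | FExR X m p => exists R : RelT m, D R /\ sat rho (updR sigma X R) p
  | FAllR X m p => forall R : RelT m, D R -> sat rho (updR sigma X R) p
  end.

Definition valid (phi : formula tau) : Prop :=
  forall (rho : nat -> scar M) (sigma : forall m, nat -> RelT m),
    (forall m X, D (sigma m X)) -> sat rho sigma phi.

End Semantics.

Definition full_models (tau : signature) (B : structure tau) (phi : formula tau)
  : Prop :=
  valid (M := sstr_of B) (fun _ _ => True) phi.

Record ultrafilter (X : Type) (U : (X -> Prop) -> Prop) : Prop := {
  uf_full : U (fun _ => True);
  uf_empty : ~ U (fun _ => False);
  uf_up : forall A B : X -> Prop, (forall x, A x -> B x) -> U A -> U B;
  uf_cap : forall A B : X -> Prop, U A -> U B -> U (fun x => A x /\ B x);
  uf_ult : forall A : X -> Prop, U A \/ U (fun x => ~ A x) }.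

Section Ultrachain.
Variable tau : signature.
Variable J : Type.
Variable B : J -> structure tau.
Variable G : (J -> Prop) -> Prop.
Variable I : nat -> Type.
Variable F : forall n, (I n -> Prop) -> Prop.

Fixpoint A (n : nat) : Type :=
  match n with
  | 0 => forall j : J, dom (B j)
  | n'.+1 => I n' -> A n'
  end.

Fixpoint eqA (n : nat) : A n -> A n -> Prop :=
  match n return A n -> A n -> Prop with
  | 0 => fun a b => G (fun j => a j = b j)
  | n'.+1 => fun f g => @F n' (fun i => @eqA n' (f i) (g i))
  end.

Fixpoint relA (n : nat) (P : rsym tau) : ('I_(rar P) -> A n) -> Prop :=
  match n return ('I_(rar P) -> A n) -> Prop with
  | 0 => fun a => G (fun j => @rel_i tau (B j) P (fun l => a l j))
  | n'.+1 => fun a => @F n' (fun i => @relA n' P (fun l => a l i))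
  end.

Fixpoint funA (n : nat) (f : fsym tau) : ('I_(far f) -> A n) -> A n :=
  match n return ('I_(far f) -> A n) -> A n with
  | 0 => fun a => fun j => @fun_i tau (B j) f (fun l => a l j)
  | n'.+1 => fun a => fun i => @funA n' f (fun l => a l i)
  end.

Fixpoint up (d n : nat) : A n -> A (d + n) :=
  match d return A n -> A (d + n) with
  | 0 => fun a => a
  | d'.+1 => fun a => fun _ : I (d' + n) => @up d' n a
  end.

(** The limit A_omega = union of the A_n (as a direct limit). *)
Definition Aom : Type := {n : nat & A n}.

Definition eqom (x y : Aom) : Prop :=
  exists d1 d2 (e : d1 + projT1 x = d2 + projT1 y),
    eqA (eq_rect _ A (@up d1 _ (projT2 x)) _ e) (@up d2 _ (projT2 y)).

Definition relom (P : rsym tau) (x : 'I_(rar P) -> Aom) : Prop :=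
  exists n (y : 'I_(rar P) -> A n),
    (forall l, eqom (x l) (existT A n (y l))) /\ @relA n P y.

Definition rep_inh (k : nat) : inhabited {n : nat & 'I_k -> A n} :=
  inhabits (existT (fun n => 'I_k -> A n) 0 (fun _ j => @dom_pt tau (B j))).

Definition funom (f : fsym tau) (x : 'I_(far f) -> Aom) : Aom :=
  let w := epsilon (rep_inh (far f))
             (fun p => forall l, eqom (x l) (existT A (projT1 p) (projT2 p l))) in
  existT A (projT1 w) (@funA (projT1 w) f (projT2 w)).

Definition Aom_str : sstr tau := @SStr tau Aom eqom relom funom.

(** Index set J x I_0 x ... x I_(n-1) and the product ultrafilter
    G x F_0 x ... x F_(n-1). *)
Fixpoint Idx (n : nat) : Type :=
  match n with
  | 0 => J
  | n'.+1 => (Idx n' * I n')%type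
  end.

Fixpoint jof (n : nat) : Idx n -> J :=
  match n return Idx n -> J with
  | 0 => fun j => j
  | n'.+1 => fun k => @jof n' k.1
  end.

Fixpoint evalA (n : nat) : A n -> forall k : Idx n, dom (B (jof k)) :=
  match n return A n -> forall k : Idx n, dom (B (jof k)) with
  | 0 => fun a k => a k
  | n'.+1 => fun a k => @evalA n' (a k.2) k.1
  end.

Fixpoint inH (n : nat) : (Idx n -> Prop) -> Prop :=
  match n return (Idx n -> Prop) -> Prop with
  | 0 => G
  | n'.+1 => fun X => @F n' (fun i => @inH n' (fun k => X (k, i)))
  end.

(** Upsilon_n: relations (arity m.+1) on A_n decomposable w.r.t. the
    presentation A_n = prod_k B_(j k) / (G x F_0 x ... x F_(n-1)). *)
Definition decomposable (n m : nat) (R : ('I_m.+1 -> A n) -> Prop) : Prop :=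
  exists Rk : forall k : Idx n, ('I_m.+1 -> dom (B (jof k))) -> Prop,
    forall a : 'I_m.+1 -> A n,
      R a <-> inH (fun k => Rk k (fun l => evalA (a l) k)).

(** <A_(k+1), R_(k+1)> = <A_k, R_k>^(I_k) / F_k, iterated d times from level n. *)
Fixpoint relUp (n m : nat) (R : ('I_m.+1 -> A n) -> Prop) (d : nat)
  : ('I_m.+1 -> A (d + n)) -> Prop :=
  match d return ('I_m.+1 -> A (d + n)) -> Prop with
  | 0 => R
  | d'.+1 => fun a => @F (d' + n) (fun i => @relUp n m R d' (fun l => a l i))
  end.

Definition Upsilon_lim (m : nat) (R : ('I_m.+1 -> Aom) -> Prop) : Prop :=
  exists (n : nat) (Rn : ('I_m.+1 -> A n) -> Prop),
    decomposable Rn /\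
    forall x : 'I_m.+1 -> Aom,
      R x <-> exists (d : nat) (y : 'I_m.+1 -> A (d + n)),
                (forall l, eqom (x l) (existT A (d + n) (y l))) /\ @relUp n m Rn d y.

Definition lambda_models (phi : formula tau) : Prop :=
  valid (M := Aom_str) Upsilon_lim phi.

End Ultrachain.

(* Through [evalA] and its inverse [pack], the level A_n of the chain is the ultraproduct of the
   B_j over J x I_0 x ... x I_(n-1) by G x F_0 x ... x F_(n-1), and a decomposable relation is the
   ultraproduct of a family of relations on the factors.  Hence Łoś's theorem holds at each level
   for second-order formulas whose relation variables range over decomposable relations: a
   relation quantifier picks a relation in almost every factor exactly as an element quantifier
   picks an element.
   The limit adds nothing: a formula mentions finitely many variables, whose values all live at
   some common level n, and lifting elements, factor relations or sets of indices from level n to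
   n+1 only composes them with the projection forgetting the last coordinate, which F_n does not
   see.  Conversely, choosing in each B_j a counterexample to phi whenever there is one yields an
   assignment in the limit under which phi holds iff it holds in G-almost every B_j. *)

From mathcomp Require Import ssreflect ssrfun ssrbool eqtype ssrnat fintype seq.
From Stdlib Require Import PeanoNat Classical ClassicalEpsilon.
From Stdlib Require Import FunctionalExtensionality PropExtensionality.

Set Implicit Arguments.
Unset Strict Implicit.
Unset Printing Implicit Defensive.

Section UltrafilterFacts.
Variables (X : Type) (U : (X -> Prop) -> Prop).
Hypothesis HU : ultrafilter U.

Lemma uf_iff (P Q : X -> Prop) : (forall x, P x <-> Q x) -> U P <-> U Q.
Proof. by move=> PQ; split; apply: (uf_up HU) => x; rewrite PQ. Qed.

Lemma uf_const (P : Prop) : U (fun _ => P) <-> P.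
Proof.
split=> [UP | p]; last by apply: (uf_up HU) (uf_full HU).
by apply: NNPP => nP; apply: (uf_empty HU); apply: (uf_up HU) UP.
Qed.

Lemma uf_not (P : X -> Prop) : U (fun x => ~ P x) <-> ~ U P.
Proof.
split; last by case: (uf_ult HU P).
by move=> UnP UP; apply: (uf_empty HU); apply: (uf_up HU) (uf_cap HU UnP UP) => x [].
Qed.

Lemma uf_and (P Q : X -> Prop) : U (fun x => P x /\ Q x) <-> U P /\ U Q.
Proof.
split=> [UPQ | [UP UQ]]; last exact: uf_cap.
by split; apply: (uf_up HU) UPQ => x [].
Qed.

Lemma uf_forall_fin (K : finType) (P : K -> X -> Prop) :
  (forall l, U (P l)) -> U (fun x => forall l, P l x).
Proof.
move=> UP; suff : U (fun x => forall l, l \in enum K -> P l x).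
  by apply: (uf_up HU) => x Px l; apply: Px; rewrite mem_enum.
elim: (enum K) => [|a s IHs]; first by apply: (uf_up HU) (uf_full HU).
apply: (uf_up HU) (uf_cap HU (UP a) IHs) => x [Pa Ps] l.
by rewrite in_cons => /orP [/eqP -> | /Ps].
Qed.

End UltrafilterFacts.

Section Lifting.
Variables (T : nat -> Type) (step : forall M, T M -> T M.+1).

(* The graph of the iterated [step]: a relation rather than a function of [d] into [T (d + n)],
   so that no casts along [d + n = M] are needed. *)
Local Unset Implicit Arguments.
Inductive lifts (n : nat) (x : T n) : forall M, T M -> Prop :=
| lifts_refl : lifts n x n x
| lifts_step M y : lifts n x M y -> lifts n x M.+1 (step y).
Local Set Implicit Arguments.
Arguments lifts {n} x {M} y.

Variables (n : nat) (x : T n).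

Fixpoint iter_step (d : nat) : T (d + n) :=
  if d is d'.+1 then step (iter_step d') else x.

Lemma liftsP (g : forall d, T (d + n)) M (y : T M) :
  g 0 = x -> (forall d, g d.+1 = step (g d)) ->
  lifts x y <-> exists d (e : d + n = M), y = eq_rect _ T (g d) M e.
Proof.
move=> g0 gS; split=> [|[d [e Ey]]].
  elim=> [|M' y' _ [d [e Ey]]]; first by exists 0, erefl.
  subst y'; case: M' / e; exists d.+1, erefl; by rewrite gS.
subst y; case: M / e => /=; elim: d => [|d IHd]; first by rewrite g0; exact: lifts_refl.
by rewrite gS; exact: lifts_step.
Qed.

Lemma lifts_leq M (y : T M) : lifts x y -> n <= M.
Proof. by elim=> // M' y' _ /leqW. Qed.

Lemma lifts_exists M : n <= M -> exists y : T M, lifts x y.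
Proof.
elim: M => [|M IHM]; first by rewrite leqn0 => /eqP <-; exists x; exact: lifts_refl.
rewrite leq_eqVlt => /orP [/eqP <- | /IHM [y xy]]; first by exists x; exact: lifts_refl.
by exists (step y); exact: lifts_step.
Qed.

Lemma lifts_det M (y y' : T M) : lifts x y -> lifts x y' -> y = y'.
Proof.
have iterP := liftsP (g := iter_step) _ erefl (fun d => erefl).
move=> /iterP [d [e ->]] /iterP [d' [e' ->]].
have dd' : d = d' by apply/eqP; rewrite -(eqn_add2r n) e e'.
by subst d'; rewrite (eq_irrelevance e e').
Qed.

Lemma lifts_trans M (y : T M) M' (z : T M') : lifts x y -> lifts y z -> lifts x z.
Proof. by move=> xy; elim=> // M'' z' _; exact: lifts_step. Qed.

Lemma lifts_invariant (Q : forall M, T M -> Prop) M (y : T M) :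
  (forall M (y : T M), n <= M -> (Q M.+1 (step y) <-> Q M y)) ->
  lifts x y -> (Q M y <-> Q n x).
Proof. by move=> Qstep; elim=> // M' y' /lifts_leq nM' <-; exact: Qstep. Qed.

End Lifting.

Arguments lifts {T} step {n} x {M} y.
Arguments lifts_refl {T step n x}.
Arguments lifts_step {T step n x M y}.

Lemma lifts_map (T T' : nat -> Type) (step : forall M, T M -> T M.+1)
    (step' : forall M, T' M -> T' M.+1) (f : forall M, T M -> T' M) :
  (forall M (y : T M), f M.+1 (step M y) = step' M (f M y)) ->
  forall n (x : T n) M (y : T M), lifts step x y -> lifts step' (f n x) (f M y).
Proof.
move=> fstep n x M y; elim=> [|M' y' _ IHy]; first exact: lifts_refl.
by rewrite fstep; exact: lifts_step.
Qed.

Lemma lifts_family (K : Type) (T : nat -> Type) (step : forall M, T M -> T M.+1)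
    n (x : K -> T n) M (y : K -> T M) :
  n <= M -> (forall l, lifts step (x l) (y l)) ->
  lifts (fun M (z : K -> T M) l => step M (z l)) x y.
Proof.
move=> nM xy; have [z xz] := lifts_exists (fun M (z : K -> T M) l => step M (z l)) x nM.
suff -> : y = z by [].
apply: functional_extensionality => l; apply: lifts_det (xy l) _.
exact: (lifts_map (f := fun M (z : K -> T M) => z l)) xz.
Qed.

Lemma choice_section (K : Type) (E : K -> Type) (inh : forall k, E k) (P : forall k, E k -> Prop) :
  exists g : forall k, E k, forall k, (exists b, P k b) -> P k (g k).
Proof. by exists (fun k => epsilon (inhabits (inh k)) (P k)) => k; exact: epsilon_spec. Qed.

Lemma bound_seq (T : eqType) (P : nat -> T -> Prop) :
  (forall N M t, N <= M -> P N t -> P M t) -> (forall t, exists N, P N t) ->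
  forall s : seq T, exists N, forall t, t \in s -> P N t.
Proof.
move=> Pmono Pex; elim=> [|a s [N Ps]]; first by exists 0.
have [Na Pa] := Pex a; exists (Na + N) => t; rewrite in_cons => /orP [/eqP -> | /Ps].
  exact: Pmono (leq_addr _ _) Pa.
exact: Pmono (leq_addl _ _).
Qed.

Section Syntax.
Variable tau : signature.

Fixpoint tvars (t : term tau) : seq nat :=
  match t with
  | TVar x => [:: x]
  | TFun f args => flatten [seq tvars (args l) | l <- enum 'I_(far f)]
  end.

Definition args_vars k (args : 'I_k -> term tau) := flatten [seq tvars (args l) | l <- enum 'I_k].

Lemma tvars_args_vars k (args : 'I_k -> term tau) l : {subset tvars (args l) <= args_vars args}.
Proof.
by move=> x xl; apply/flattenP; exists (tvars (args l)) => //; apply: map_f; rewrite mem_enum.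
Qed.

(* Bound occurrences are collected as well. *)
Fixpoint fvars (p : formula tau) : seq nat :=
  match p with
  | FEq t1 t2 => tvars t1 ++ tvars t2
  | FRel _ args => args_vars args
  | FVar _ _ args => args_vars args
  | FNot p => fvars p
  | FAnd p q | FOr p q | FImp p q => fvars p ++ fvars q
  | FEx _ p | FAll _ p | FExR _ _ p | FAllR _ _ p => fvars p
  end.

Fixpoint frvars (p : formula tau) : seq (nat * nat) :=
  match p with
  | FEq _ _ | FRel _ _ => [::]
  | FVar X m _ => [:: (X, m)]
  | FNot p => frvars p
  | FAnd p q | FOr p q | FImp p q => frvars p ++ frvars q
  | FEx _ p | FAll _ p | FExR _ _ p | FAllR _ _ p => frvars p
  end.

End Syntax.

Section ClassicalConnectives.
Variables (tau : signature) (p q : formula tau) (x X m : nat).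

Lemma sat_or (M : sstr tau) (D : forall k, RelT M k -> Prop) rho sigma :
  sat D rho sigma (FOr p q) <-> sat D rho sigma (FNot (FAnd (FNot p) (FNot q))).
Proof. by rewrite /=; split=> [[] ? [] | /not_and_or [] /NNPP]; auto. Qed.

Lemma sat_imp (M : sstr tau) (D : forall k, RelT M k -> Prop) rho sigma :
  sat D rho sigma (FImp p q) <-> sat D rho sigma (FNot (FAnd p (FNot q))).
Proof. by rewrite /=; split=> [pq [/pq] | /not_and_or [|/NNPP]]; auto. Qed.

Lemma sat_all (M : sstr tau) (D : forall k, RelT M k -> Prop) rho sigma :
  sat D rho sigma (FAll x p) <-> sat D rho sigma (FNot (FEx x (FNot p))).
Proof. by rewrite /=; split=> [all_p [a] | /not_ex_not_all]; auto. Qed.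

Lemma sat_allR (M : sstr tau) (D : forall k, RelT M k -> Prop) rho sigma :
  sat D rho sigma (FAllR X m p) <-> sat D rho sigma (FNot (FExR X m (FNot p))).
Proof.
rewrite /=; split=> [all_p [R [DR]] | nex R DR]; first by apply; exact: all_p.
by apply: NNPP => np; apply: nex; exists R.
Qed.

End ClassicalConnectives.

Section Chain.
Variables (tau : signature) (J : Type) (B : J -> structure tau).
Variables (G : (J -> Prop) -> Prop) (I : nat -> Type) (F : forall n, (I n -> Prop) -> Prop).
Hypotheses (HG : ultrafilter G) (HF : forall n, ultrafilter (@F n)).

Local Notation AA := (A B I).
Local Notation IX := (Idx J I).
Local Notation inH := (@inH J G I F).
Local Notation eqA := (@eqA tau J B G I F).
Local Notation relA := (@relA tau J B G I F).
Local Notation eqom := (@eqom tau J B G I F).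
Local Notation Aom := (Aom B I).
Local Notation Sec N := (forall kk : IX N, dom (B (jof kk))).

(** * The levels as ultraproducts *)

Lemma inH_ultrafilter N : ultrafilter (@inH N).
Proof.
elim: N => [|N IHN] //=; have FN := HF N; split.
- by apply: (uf_up FN) (uf_full FN) => i _; exact: uf_full.
- by move=> H; apply: (uf_empty FN); apply: (uf_up FN) H => i; exact: uf_empty.
- by move=> P Q PQ; apply: (uf_up FN) => i; apply: (uf_up IHN) => kk; exact: PQ.
- by move=> P Q HP HQ; apply: (uf_up FN) (uf_cap FN HP HQ) => i [] /uf_cap; apply.
- move=> P; case: (uf_ult FN (fun i => inH (fun kk => P (kk, i)))) => HP; [by left | right].
  by apply: (uf_up FN) HP => i /(uf_not IHN).
Qed.

Local Notation ufH N := (inH_ultrafilter N).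

Fixpoint pack (N : nat) : Sec N -> AA N :=
  match N return Sec N -> AA N with
  | 0 => fun s => s
  | N'.+1 => fun s i => @pack N' (fun kk => s (kk, i))
  end.

Lemma evalA_pack N (s : Sec N) kk : evalA (pack s) kk = s kk.
Proof. by elim: N s kk => [|N IHN] s //= [kk i] /=; rewrite IHN. Qed.

Lemma pack_evalA N (a : AA N) : pack (evalA a) = a.
Proof. by elim: N a => [|N IHN] a //=; apply: functional_extensionality => i; exact: IHN. Qed.

Lemma eqA_inH N (a b : AA N) : eqA a b <-> inH (fun kk => evalA a kk = evalA b kk).
Proof. by elim: N a b => [|N IHN] a b //=; apply: (uf_iff (HF N)) => i; exact: IHN. Qed.

Lemma relA_inH N P (a : 'I_(rar P) -> AA N) :
  relA a <-> inH (fun kk => rel_i (fun l => evalA (a l) kk)).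
Proof. by elim: N a => [|N IHN] a //=; apply: (uf_iff (HF N)) => i; exact: IHN. Qed.

Lemma evalA_funA N f (a : 'I_(far f) -> AA N) kk :
  evalA (funA a) kk = fun_i (fun l => evalA (a l) kk).
Proof. by elim: N a kk => [|N IHN] a //= [kk i] /=; rewrite IHN. Qed.

Lemma inH_jof N (P : J -> Prop) : @inH N (fun kk => P (jof kk)) <-> G P.
Proof. by elim: N => [|N IHN] //=; rewrite -IHN; exact: uf_const. Qed.

Lemma inH_fst N (Q : IX N -> Prop) : @inH N.+1 (fun p => Q p.1) <-> inH Q.
Proof. exact: uf_const. Qed.

Lemma eqA_refl N (a : AA N) : eqA a a.
Proof. by apply/eqA_inH; apply: (uf_up (ufH N)) (uf_full (ufH N)). Qed.

Lemma eqA_sym N (a b : AA N) : eqA a b -> eqA b a.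
Proof. by move/eqA_inH => ab; apply/eqA_inH; apply: (uf_up (ufH N)) ab. Qed.

Lemma eqA_trans N (a b c : AA N) : eqA a b -> eqA b c -> eqA a c.
Proof.
move=> /eqA_inH ab /eqA_inH bc; apply/eqA_inH.
by apply: (uf_up (ufH N)) (uf_cap (ufH N) ab bc) => kk [-> ->].
Qed.

(** * The limit A_omega *)

Local Notation stepA := (fun M (b : AA M) (_ : I M) => b).
Local Notation liftsA := (lifts stepA).
Local Notation stepF := (fun M (z : _ -> AA M) l (_ : I M) => z l).
Local Notation liftsF := (lifts stepF).

Lemma eqA_lifts n (a a' : AA n) M (b b' : AA M) :
  liftsA a b -> liftsA a' b' -> (eqA b b' <-> eqA a a').
Proof.
move=> ab ab'; have nM := lifts_leq ab.
have pair : liftsF (fun t : bool => if t then a else a') (fun t : bool => if t then b else b').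
  by apply: (lifts_family (step := stepA)) nM _ => -[].
apply: (lifts_invariant (Q := fun M (z : bool -> AA M) => eqA (z true) (z false))) pair.
by move=> M' z _ /=; exact: uf_const.
Qed.

Lemma eqom_liftsP n (a : AA n) n' (a' : AA n') :
  eqom (existT AA n a) (existT AA n' a') <->
  exists M (b b' : AA M), liftsA a b /\ liftsA a' b' /\ eqA b b'.
Proof.
have upP k (c : AA k) M (b : AA M) :
    liftsA c b <-> exists d (e : d + k = M), b = eq_rect _ AA (up d c) M e.
  exact: (liftsP (g := fun d => up d c)).
split=> [[d [d' [e ab]]] | [M [b [b' [ab [ab' bb']]]]]].
  exists (d' + n'), (eq_rect _ AA (up d a) _ e), (up d' a'); split; last split=> //.
  - by apply/upP; exists d, e.
  - by apply/upP; exists d', erefl.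
move: ab ab' => /upP [d [e Eb]] /upP [d' [e' Eb']]; subst b b'.
by case: M / e' e bb' => e bb'; exists d, d', e.
Qed.

Lemma eqom_at n (a : AA n) n' (a' : AA n') L (b b' : AA L) :
  eqom (existT AA n a) (existT AA n' a') -> liftsA a b -> liftsA a' b' -> eqA b b'.
Proof.
move=> /eqom_liftsP [M [c [c' [ac [ac' cc']]]]] ab ab'.
have [d bd] := lifts_exists stepA b (leq_addr M L).
have [d' bd'] := lifts_exists stepA b' (leq_addr M L).
have [e ce] := lifts_exists stepA c (leq_addl L M).
have [e' ce'] := lifts_exists stepA c' (leq_addl L M).
have de : d = e by apply: lifts_det (lifts_trans ab bd) (lifts_trans ac ce).
have de' : d' = e' by apply: lifts_det (lifts_trans ab' bd') (lifts_trans ac' ce').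
by subst e e'; apply/(eqA_lifts bd bd'); apply/(eqA_lifts ce ce').
Qed.

Lemma eqom_lifts n (a : AA n) M (b : AA M) :
  liftsA a b -> eqom (existT AA n a) (existT AA M b).
Proof.
move=> ab; apply/eqom_liftsP; exists M, b, b.
by do !split=> //; [exact: lifts_refl | exact: eqA_refl].
Qed.

Lemma eqom_refl x : eqom x x.
Proof. by case: x => n a; apply: eqom_lifts; exact: lifts_refl. Qed.

Lemma eqom_sym x y : eqom x y -> eqom y x.
Proof.
move: x y => [n a] [n' a'] /eqom_liftsP [M [b [b' [ab [ab' bb']]]]].
by apply/eqom_liftsP; exists M, b', b; split=> //; split=> //; exact: eqA_sym.
Qed.

Lemma eqom_trans x y z : eqom x y -> eqom y z -> eqom x z.
Proof.
move: x y z => [n1 a1] [n2 a2] [n3 a3] xy yz; pose L := n1 + n2 + n3.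
have [b1 ab1] : exists b : AA L, liftsA a1 b by apply: lifts_exists; rewrite /L -addnA leq_addr.
have [b2 ab2] : exists b : AA L, liftsA a2 b by apply: lifts_exists; rewrite /L addnAC leq_addl.
have [b3 ab3] : exists b : AA L, liftsA a3 b by apply: lifts_exists; rewrite leq_addl.
apply/eqom_liftsP; exists L, b1, b3; split=> //; split=> //.
exact: eqA_trans (eqom_at xy ab1 ab2) (eqom_at yz ab2 ab3).
Qed.

Lemma eqom_same_level N (a b : AA N) : eqom (existT AA N a) (existT AA N b) <-> eqA a b.
Proof.
split=> ab; first by apply: (eqom_at ab); exact: lifts_refl.
by apply/eqom_liftsP; exists N, a, b; do !split=> //; exact: lifts_refl.
Qed.

Lemma liftsF_lifts K n (y : K -> AA n) M (z : K -> AA M) l : liftsF y z -> liftsA (y l) (z l).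
Proof. exact: (lifts_map (f := fun M (z : K -> AA M) => z l)). Qed.

Lemma eqom_invariant (K : Type) (b : nat) (Q : forall M, (K -> AA M) -> Prop) :
  (forall M (y : K -> AA M), b <= M -> (Q M.+1 (fun l _ => y l) <-> Q M y)) ->
  (forall M (y y' : K -> AA M), (forall l, eqA (y l) (y' l)) -> Q M y -> Q M y') ->
  forall n (y : K -> AA n) N (a : K -> AA N), b <= n -> b <= N ->
  (forall l, eqom (existT AA n (y l)) (existT AA N (a l))) -> (Q n y <-> Q N a).
Proof.
move=> Qstep Qext n y N a bn bN ya.
have [yL yyL] := lifts_exists stepF y (leq_addr N n).
have [aL aaL] := lifts_exists stepF a (leq_addl n N).
have QL c (z : K -> AA c) (zL : K -> AA (n + N)) : b <= c -> liftsF z zL -> (Q _ zL <-> Q c z).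
  move=> bc; apply: lifts_invariant => M w cM; apply: Qstep; exact: leq_trans cM.
have yaL l : eqA (yL l) (aL l) by apply: eqom_at (ya l) _ _; exact: liftsF_lifts.
rewrite -(QL _ _ _ bn yyL) -(QL _ _ _ bN aaL).
by split; apply: Qext => l //; exact: eqA_sym.
Qed.

Lemma inH_eqA_ext N (K : finType) (Q : forall kk : IX N, (K -> dom (B (jof kk))) -> Prop)
    (y y' : K -> AA N) :
  (forall l, eqA (y l) (y' l)) ->
  inH (fun kk => Q kk (fun l => evalA (y l) kk)) -> inH (fun kk => Q kk (fun l => evalA (y' l) kk)).
Proof.
move=> yy' Qy.
have /uf_forall_fin yy'_ae l : inH (fun kk => evalA (y l) kk = evalA (y' l) kk) by apply/eqA_inH.
apply: (uf_up (ufH N)) (uf_cap (ufH N) Qy (yy'_ae (ufH N))) => kk [Qkk Ekk].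
suff <- : (fun l => evalA (y l) kk) = (fun l => evalA (y' l) kk) by [].
exact: functional_extensionality.
Qed.

Lemma relA_eqom P n (y : 'I_(rar P) -> AA n) N (a : 'I_(rar P) -> AA N) :
  (forall l, eqom (existT AA n (y l)) (existT AA N (a l))) -> (relA y <-> relA a).
Proof.
apply: (@eqom_invariant _ 0 (fun M y => relA y)) => // [M z _ | M z z' zz' /relA_inH Qz].
  exact: uf_const.
by apply/relA_inH; exact: (inH_eqA_ext (Q := fun kk w => @rel_i tau (B (jof kk)) P w) zz' Qz).
Qed.

Lemma funA_eqA f N (z z' : 'I_(far f) -> AA N) :
  (forall l, eqA (z l) (z' l)) -> eqA (funA z) (funA z').
Proof.
move=> zz'; apply/eqA_inH.
have refl_ae : inH (fun kk => fun_i (fun l => evalA (z' l) kk) = evalA (funA z') kk).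
  by apply: (uf_up (ufH N)) (uf_full (ufH N)) => kk _; rewrite evalA_funA.
have := inH_eqA_ext (Q := fun kk w => @fun_i tau (B (jof kk)) f w = evalA (funA z') kk)
  (fun l => eqA_sym (zz' l)) refl_ae.
by apply: (uf_up (ufH N)) => kk <-; exact: evalA_funA.
Qed.

Lemma funA_eqom f n (y : 'I_(far f) -> AA n) N (a : 'I_(far f) -> AA N) :
  (forall l, eqom (existT AA n (y l)) (existT AA N (a l))) ->
  eqom (existT AA n (funA y)) (existT AA N (funA a)).
Proof.
pose Q M (z : 'I_(far f) -> AA M) := eqom (existT AA n (funA y)) (existT AA M (funA z)).
have step M (c : AA M) : eqom (existT AA M c) (existT AA M.+1 (stepA M c)).
  by apply: eqom_lifts; apply: lifts_step; exact: lifts_refl.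
move=> ya; suff QnQN : Q n y <-> Q N a by apply/QnQN; exact: eqom_refl.
apply: (@eqom_invariant _ 0 Q) => // [M z _ | M z z' zz' Qz].
  by split=> Qz; [apply: eqom_trans Qz (eqom_sym (step _ _)) | apply: eqom_trans Qz (step _ _)].
by apply: eqom_trans Qz _; apply/eqom_same_level; exact: funA_eqA.
Qed.

(** * Limits of decomposable relations *)

Local Notation stepR m := (fun M (S : ('I_m.+1 -> AA M) -> Prop) (a : 'I_m.+1 -> AA M.+1) =>
  @F M (fun i => S (fun l => a l i))).
Local Notation towers m := (lifts (stepR m)).

Definition eqA_closed m N (R : ('I_m.+1 -> AA N) -> Prop) :=
  forall y y', (forall l, eqA (y l) (y' l)) -> R y -> R y'.

Lemma towers_eqA_closed m N (R : ('I_m.+1 -> AA N) -> Prop) M (S : ('I_m.+1 -> AA M) -> Prop) :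
  eqA_closed R -> towers m R S -> eqA_closed S.
Proof.
move=> closedR; elim=> // M' S' _ closedS' y y' yy' /= Sy.
have /uf_forall_fin yy'_ae : forall l, @F M' (fun i => eqA (y l i) (y' l i)) by [].
apply: (uf_up (HF M')) (uf_cap (HF M') Sy (yy'_ae (HF M'))) => i [Syi yyi].
exact: closedS' Syi.
Qed.

Lemma towers_eqom m N (R : ('I_m.+1 -> AA N) -> Prop) M1 (S1 : ('I_m.+1 -> AA M1) -> Prop)
    M2 (S2 : ('I_m.+1 -> AA M2) -> Prop) (y1 : 'I_m.+1 -> AA M1) (y2 : 'I_m.+1 -> AA M2) :
  eqA_closed R -> towers m R S1 -> towers m R S2 ->
  (forall l, eqom (existT AA M1 (y1 l)) (existT AA M2 (y2 l))) -> (S1 y1 <-> S2 y2).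
Proof.
move=> closedR RS1 RS2 y12.
(* Below level [N] there is no tower relation and [Q] holds vacuously. *)
pose Q M (y : 'I_m.+1 -> AA M) := forall S, towers m R S -> S y.
have QE M (S : ('I_m.+1 -> AA M) -> Prop) y : towers m R S -> (Q M y <-> S y).
  by move=> RS; split=> [/(_ S RS) // | Sy S' RS']; rewrite -(lifts_det RS RS').
rewrite -(QE _ _ _ RS1) -(QE _ _ _ RS2).
apply: (@eqom_invariant _ N Q) (lifts_leq RS1) (lifts_leq RS2) y12
  => [M y NM | M y y' yy' Qy S RS].
  have [S RS] := lifts_exists (stepR m) R NM.
  by rewrite (QE _ _ _ RS) (QE _ _ _ (lifts_step RS)); exact: uf_const.
exact: towers_eqA_closed closedR RS _ _ yy' (Qy S RS).
Qed.

Definition RelK m (j : J) := RelT (sstr_of (B j)) m.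

Local Notation RelN m N := (forall kk : IX N, RelK m (jof kk)).

Definition uprod_rel m N (Rk : RelN m N) : ('I_m.+1 -> AA N) -> Prop :=
  fun y => inH (fun kk => Rk kk (fun l => evalA (y l) kk)).

Lemma uprod_rel_eqA_closed m N (Rk : RelN m N) : eqA_closed (uprod_rel Rk).
Proof. by move=> y y' yy'; exact: (inH_eqA_ext (Q := Rk) yy'). Qed.

Local Notation relUpA R d := (@relUp tau J B I F _ _ R d).

Definition limit_rel m N (Rk : RelN m N) : ('I_m.+1 -> Aom) -> Prop :=
  fun x => exists d (y : 'I_m.+1 -> AA (d + N)),
    (forall l, eqom (x l) (existT AA (d + N) (y l))) /\ relUpA (uprod_rel Rk) d y.

Definition represents m N (Rk : RelN m N) (R : ('I_m.+1 -> Aom) -> Prop) :=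
  forall M (S : ('I_m.+1 -> AA M) -> Prop), towers m (uprod_rel Rk) S ->
  forall y x, (forall l, eqom (x l) (existT AA M (y l))) -> (R x <-> S y).

Lemma limit_rel_represents m N (Rk : RelN m N) :
  represents Rk (limit_rel Rk).
Proof.
have relUpP M (S : ('I_m.+1 -> AA M) -> Prop) : towers m (uprod_rel Rk) S <->
    exists d (e : d + N = M),
      S = eq_rect _ (fun M => ('I_m.+1 -> AA M) -> Prop) (relUpA (uprod_rel Rk) d) M e.
  exact: (liftsP (g := fun d => relUpA (uprod_rel Rk) d)).
move=> M S RS y x xy; split=> [[d [y' [xy' Ry']]] | Sy].
  have RSd : towers m (uprod_rel Rk) (relUpA (uprod_rel Rk) d) by apply/relUpP; exists d, erefl.
  apply: (towers_eqom (@uprod_rel_eqA_closed m N Rk) RSd RS _).1 Ry' => l.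
  exact: eqom_trans (eqom_sym (xy' l)) (xy l).
case/relUpP: RS => d [e ES]; subst S.
by case: M / e y xy Sy => y xy Sy; exists d, y.
Qed.

Lemma Upsilon_lim_limit_rel m N (Rk : RelN m N) :
  Upsilon_lim G F (limit_rel Rk).
Proof. by exists N, (uprod_rel Rk); split=> //; exists Rk. Qed.

Lemma Upsilon_lim_represented m (R : ('I_m.+1 -> Aom) -> Prop) :
  Upsilon_lim G F R -> exists N (Rk : RelN m N), represents Rk R.
Proof.
move=> [N [Rn [[Rk RnE] RE]]]; exists N, Rk.
have RnE' : Rn = uprod_rel Rk.
  by apply: functional_extensionality => y; apply: propositional_extensionality; exact: RnE.
subst Rn.
by move=> M S RS y x xy; rewrite RE; exact: limit_rel_represents RS y x xy.
Qed.

Local Notation Sect E N := (forall kk : IX N, E (jof kk)).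
Local Notation stepS E := (fun M (s : Sect E M) (p : IX M.+1) => s p.1).
Local Notation liftsS E := (lifts (stepS E)).

Lemma inH_liftsS (E : J -> Type) N (s : Sect E N) M (sM : Sect E M) (Q : forall j, E j -> Prop) :
  liftsS E s sM -> (inH (fun kk => Q _ (sM kk)) <-> inH (fun kk => Q _ (s kk))).
Proof.
apply: (lifts_invariant (Q := fun M (s : Sect E M) => inH (fun kk => Q _ (s kk)))).
by move=> M' s' _; exact: (inH_fst (fun kk => Q _ (s' kk))).
Qed.

Lemma liftsS_map (E E' : J -> Type) (f : forall j, E j -> E' j)
    N (s : Sect E N) M (sM : Sect E M) :
  liftsS E s sM -> liftsS E' (fun kk => f _ (s kk)) (fun kk => f _ (sM kk)).
Proof. exact: (lifts_map (f := fun M (s : Sect E M) kk => f _ (s kk))). Qed.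

Lemma pack_liftsS N (s : Sec N) M (sM : Sec M) :
  liftsS (fun j => dom (B j)) s sM -> liftsA (pack s) (pack sM).
Proof. exact: (lifts_map (f := pack)). Qed.

Lemma represents_liftsS m N (Rk : RelN m N)
    M (RkM : RelN m M) R :
  liftsS (RelK m) Rk RkM -> represents Rk R -> represents RkM R.
Proof.
move=> RkRkM RkR M' S RkMS; apply: RkR; apply: lifts_trans RkMS.
exact: (lifts_map (f := fun M (Rk : RelN m M) => uprod_rel Rk)) RkRkM.
Qed.

(** * Łoś's theorem for the limit-Henkin model *)

Definition Env (j : J) := ((nat -> dom (B j)) * (forall m, nat -> RelK m j))%type.
Local Notation EnvN N := (forall kk : IX N, Env (jof kk)).

Local Notation AS := (Aom_str B G F).
Local Notation satA := (@sat tau AS (Upsilon_lim G F)).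

Local Notation tevalB kk := (@teval tau (sstr_of (B (jof kk)))).

Definition satB j (ev : Env j) (p : formula tau) :=
  @sat tau (sstr_of (B j)) (fun _ _ => True) ev.1 ev.2 p.

Definition env_represents N (e : EnvN N) (rho : nat -> Aom)
    (sigma : forall m, nat -> RelT AS m) (p : formula tau) :=
  (forall x, x \in fvars p -> eqom (rho x) (existT AA N (pack (fun kk => (e kk).1 x)))) /\
  (forall X m, (X, m) \in frvars p -> represents (fun kk => (e kk).2 m X) (sigma m X)).

Definition term_rep N (e : EnvN N) (t : term tau) : AA N :=
  pack (fun kk => tevalB kk (e kk).1 t).

Lemma evalA_term_rep N (e : EnvN N) k (args : 'I_k -> term tau) kk :
  (fun l => evalA (term_rep e (args l)) kk) = (fun l => tevalB kk (e kk).1 (args l)).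
Proof. by apply: functional_extensionality => l; exact: evalA_pack. Qed.

Lemma funom_eqom f (x : 'I_(far f) -> Aom) N (y : 'I_(far f) -> AA N) :
  (forall l, eqom (x l) (existT AA N (y l))) -> eqom (funom G F x) (existT AA N (funA y)).
Proof.
move=> xy; rewrite /funom.
have := epsilon_spec (rep_inh B I (far f))
  (fun w => forall l, eqom (x l) (existT AA (projT1 w) (projT2 w l)))
  (ex_intro _ (existT _ N y) xy).
set w := epsilon _ _ => xw.
by apply: funA_eqom => l; apply: eqom_trans (eqom_sym (xw l)) (xy l).
Qed.

Lemma funA_pack f N (s : 'I_(far f) -> Sec N) :
  funA (fun l => pack (s l)) = pack (fun kk => fun_i (fun l => s l kk)).
Proof.
rewrite -[LHS]pack_evalA; congr pack; apply: functional_extensionality_dep => kk.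
by rewrite evalA_funA; congr fun_i; apply: functional_extensionality => l; rewrite evalA_pack.
Qed.

Lemma teval_eqom N (e : EnvN N) rho t :
  (forall x, x \in tvars t -> eqom (rho x) (existT AA N (pack (fun kk => (e kk).1 x)))) ->
  eqom (@teval tau AS rho t) (existT AA N (term_rep e t)).
Proof.
elim: t => [x | f args IHargs] rep_t; first by apply: rep_t; rewrite mem_seq1.
rewrite /term_rep /= -funA_pack; apply: funom_eqom => l.
by apply: IHargs => x xl; apply: rep_t; exact: tvars_args_vars xl.
Qed.

Definition los (p : formula tau) := forall N (e : EnvN N) rho sigma,
  env_represents e rho sigma p -> (satA rho sigma p <-> inH (fun kk => satB (e kk) p)).

Lemma los_equiv p q :
  (forall (M : sstr tau) D rho sigma, @sat tau M D rho sigma p <-> sat D rho sigma q) ->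
  fvars p = fvars q -> frvars p = frvars q -> los q -> los p.
Proof.
move=> pq fvE frvE losq N e rho sigma; rewrite /env_represents fvE frvE => /losq.
by rewrite pq => ->; apply: (uf_iff (ufH N)) => kk; rewrite /satB pq.
Qed.

Lemma relom_at P (x : 'I_(rar P) -> Aom) N (y : 'I_(rar P) -> AA N) :
  (forall l, eqom (x l) (existT AA N (y l))) -> (relom G F x <-> relA y).
Proof.
move=> xy; split=> [[n [y' [xy' Ry']]] | Ry]; last by exists N, y.
apply: (relA_eqom _).1 Ry' => l; exact: eqom_trans (eqom_sym (xy' l)) (xy l).
Qed.

Lemma los_eq t1 t2 : los (FEq t1 t2).
Proof.
move=> N e rho sigma [rep _].
have r1 : eqom (@teval tau AS rho t1) (existT AA N (term_rep e t1)).
  by apply: teval_eqom => x x1; apply: rep; rewrite mem_cat x1.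
have r2 : eqom (@teval tau AS rho t2) (existT AA N (term_rep e t2)).
  by apply: teval_eqom => x x2; apply: rep; rewrite mem_cat x2 orbT.
have -> : satA rho sigma (FEq t1 t2) <-> eqA (term_rep e t1) (term_rep e t2).
  rewrite -eqom_same_level; split=> t12.
    exact: eqom_trans (eqom_sym r1) (eqom_trans t12 r2).
  exact: eqom_trans r1 (eqom_trans t12 (eqom_sym r2)).
by rewrite eqA_inH; apply: (uf_iff (ufH N)) => kk; rewrite !evalA_pack.
Qed.

Lemma los_rel P (args : 'I_(rar P) -> term tau) : los (FRel args).
Proof.
move=> N e rho sigma [rep _].
have rel_rep :
    relom G F (fun l => @teval tau AS rho (args l)) <-> relA (fun l => term_rep e (args l)).
  by apply: relom_at => l; apply: teval_eqom => x xl; apply: rep; exact: tvars_args_vars xl.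
rewrite /= rel_rep relA_inH; apply: (uf_iff (ufH N)) => kk.
by rewrite evalA_term_rep.
Qed.

Lemma los_var X m (args : 'I_m.+1 -> term tau) : los (FVar X args).
Proof.
move=> N e rho sigma [rep rrep].
have var_rep : satA rho sigma (FVar X args) <->
    uprod_rel (fun kk => (e kk).2 m X) (fun l => term_rep e (args l)).
  apply: (rrep X m _ _ _ lifts_refl) => [|l]; first by rewrite mem_seq1.
  by apply: teval_eqom => x xl; apply: rep; exact: tvars_args_vars xl.
by rewrite var_rep; apply: (uf_iff (ufH N)) => kk; rewrite evalA_term_rep.
Qed.

Lemma los_not p : los p -> los (FNot p).
Proof. by move=> losp N e rho sigma /losp /= ->; rewrite -(uf_not (ufH N)). Qed.

Lemma env_represents_sub N (e : EnvN N) rho sigma p q :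
  {subset fvars p <= fvars q} -> {subset frvars p <= frvars q} ->
  env_represents e rho sigma q -> env_represents e rho sigma p.
Proof. by move=> sub rsub [rep rrep]; split=> [x /sub | X m /rsub]; [exact: rep | exact: rrep]. Qed.

Lemma los_and p q : los p -> los q -> los (FAnd p q).
Proof.
move=> losp losq N e rho sigma rep /=.
have /losp -> : env_represents e rho sigma p.
  by apply: env_represents_sub rep => x xp; rewrite /= mem_cat xp.
have /losq -> : env_represents e rho sigma q.
  by apply: env_represents_sub rep => x xq; rewrite /= mem_cat xq orbT.
exact: iff_sym (uf_and (ufH N) (fun kk => satB (e kk) p) (fun kk => satB (e kk) q)).
Qed.

Local Notation updA := (@upd1 tau AS).
Local Notation updk j := (@upd1 tau (sstr_of (B j))).
Local Notation updRA := (@updR tau AS).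
Local Notation updRk j := (@updR tau (sstr_of (B j))).

Lemma env_represents_liftsS N (e : EnvN N) M (eM : EnvN M)
    rho sigma p :
  liftsS Env e eM -> env_represents e rho sigma p -> env_represents eM rho sigma p.
Proof.
move=> eeM [rep rrep]; split=> [x /rep xN | X m Xp].
  apply: eqom_trans xN (eqom_lifts (pack_liftsS _)).
  exact: (liftsS_map (fun j (ev : Env j) => ev.1 x) eeM).
apply: represents_liftsS (rrep X m Xp).
exact: (liftsS_map (fun j (ev : Env j) => ev.2 m X) eeM).
Qed.

Lemma env_represents_upd1 N (e : EnvN N) rho sigma x p a (g : Sec N) :
  eqom a (existT AA N (pack g)) -> env_represents e rho sigma p ->
  env_represents (fun kk => (updk _ (e kk).1 x (g kk), (e kk).2)) (updA rho x a) sigma p.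
Proof. by move=> ag [rep rrep]; split=> // y /rep; rewrite /upd1 /=; case: (Nat.eqb y x). Qed.

Lemma env_represents_updR N (e : EnvN N) rho sigma X m p
    (Rk : RelN m N) R :
  represents Rk R -> env_represents e rho sigma p ->
  env_represents (fun kk => ((e kk).1, updRk _ (e kk).2 X (Rk kk))) rho (updRA sigma X R) p.
Proof.
move=> RkR [rep rrep]; split=> // Y k Yp; move: {Yp}(rrep Y k Yp); rewrite /updR /=.
case: (Nat.eq_dec m k) => [mk | _]; last exact: id.
by case: k / mk; case: (Nat.eqb Y X).
Qed.

Lemma los_ex x p : los p -> los (FEx x p).
Proof.
move=> losp N e rho sigma rep; split=> [[[n a] sat_p] | ae_p].
  have [eM eeM] := lifts_exists (stepS Env) e (leq_addr n N).
  have [aM aaM] := lifts_exists stepA a (leq_addl N n).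
  have repM : env_represents (fun kk => (updk _ (eM kk).1 x (evalA aM kk), (eM kk).2))
      (updA rho x (existT AA n a)) sigma p.
    apply: env_represents_upd1 (env_represents_liftsS eeM rep).
    by rewrite pack_evalA; exact: eqom_lifts.
  move/(losp _ _ _ _ repM): sat_p => ae_p.
  apply/(inH_liftsS (fun j (ev : Env j) => exists b, satB (updk j ev.1 x b, ev.2) p) eeM).
  by apply: (uf_up (ufH _)) ae_p => kk sat_kk; exists (evalA aM kk).
have [g gP] := choice_section (fun kk => dom_pt (B (jof kk)))
  (fun kk b => satB (updk _ (e kk).1 x b, (e kk).2) p).
exists (existT AA N (pack g)).
apply/(losp _ _ _ _ (env_represents_upd1 x (g := g) (eqom_refl _) rep)).
by apply: (uf_up (ufH N)) ae_p => kk /gP.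
Qed.

Lemma los_exR X m p : los p -> los (FExR X m p).
Proof.
move=> losp N e rho sigma rep; split=> [[R [ULR sat_p]] | ae_p].
  have [n [Rk RkR]] := Upsilon_lim_represented ULR.
  have [eM eeM] := lifts_exists (stepS Env) e (leq_addr n N).
  have [RkM RkRkM] := lifts_exists (stepS (RelK m)) Rk (leq_addl N n).
  have repM := env_represents_updR X (represents_liftsS RkRkM RkR) (env_represents_liftsS eeM rep).
  move/(losp _ _ _ _ repM): sat_p => ae_p.
  apply/(inH_liftsS (fun j (ev : Env j) => exists S, True /\ satB (ev.1, updRk j ev.2 X S) p) eeM).
  by apply: (uf_up (ufH _)) ae_p => kk sat_kk; exists (RkM kk).
have [Rk RkP] := choice_section (E := fun kk : IX N => RelK m (jof kk)) (fun kk _ => True)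
  (fun kk S => True /\ satB ((e kk).1, updRk _ (e kk).2 X S) p).
exists (limit_rel Rk); split; first exact: Upsilon_lim_limit_rel.
apply/(losp _ _ _ _ (env_represents_updR X (limit_rel_represents (Rk := Rk)) rep)).
by apply: (uf_up (ufH N)) ae_p => kk /RkP [].
Qed.

Lemma los_formula p : los p.
Proof.
elim: p => [t1 t2 | P args | X m args | p losp | p losp q losq | p losp q losq | p losp q losq
  | x p losp | x p losp | X m p losp | X m p losp].
- exact: los_eq.
- exact: los_rel.
- exact: los_var.
- exact: los_not.
- exact: los_and.
- by apply: (los_equiv (sat_or p q)) => //; apply/los_not/los_and; exact: los_not.
- by apply: (los_equiv (sat_imp p q)) => //; apply/los_not/los_and => //; exact: los_not.
- exact: los_ex.
- by apply: (los_equiv (sat_all p x)) => //; apply/los_not/los_ex; exact: los_not.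
- exact: los_exR.
- by apply: (los_equiv (sat_allR p X m)) => //; apply/los_not/los_exR; exact: los_not.
Qed.

(* Only finitely many variables occur in [p], so all their values live at one common level. *)
Lemma exists_env_represents rho sigma p :
  (forall m X, Upsilon_lim G F (sigma m X)) -> exists N (e : EnvN N), env_represents e rho sigma p.
Proof.
move=> adm.
pose rho_at N x := exists a : AA N, eqom (rho x) (existT AA N a).
pose sigma_at N (Xm : nat * nat) :=
  exists Rk : forall kk : IX N, RelK Xm.2 (jof kk), represents Rk (sigma Xm.2 Xm.1).
have rho_at_mono N M x : N <= M -> rho_at N x -> rho_at M x.
  move=> NM [a xa]; have [b ab] := lifts_exists stepA a NM.
  by exists b; exact: eqom_trans xa (eqom_lifts ab).
have sigma_at_mono N M Xm : N <= M -> sigma_at N Xm -> sigma_at M Xm.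
  move=> NM [Rk RkR]; have [RkM RkRkM] := lifts_exists (stepS (RelK Xm.2)) Rk NM.
  by exists RkM; exact: represents_liftsS RkRkM RkR.
have [Nv Hv] : exists N, forall x, x \in fvars p -> rho_at N x.
  apply: bound_seq => // x; exists (projT1 (rho x)), (projT2 (rho x)).
  by case: (rho x) => n a; exact: eqom_refl.
have [Nr Hr] : exists N, forall Xm, Xm \in frvars p -> sigma_at N Xm.
  by apply: bound_seq => // -[X m]; exact: Upsilon_lim_represented.
pose N := Nv + Nr.
pose a x := epsilon (inhabits (pack (fun kk : IX N => dom_pt (B (jof kk)))))
  (fun a : AA N => eqom (rho x) (existT AA N a)).
pose Rk m X := epsilon (inhabits (fun kk : IX N => (fun _ => True) : RelK m (jof kk)))
  (fun Rk => represents Rk (sigma m X)).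
exists N, (fun kk => (fun x => evalA (a x) kk, fun m X => Rk m X kk)); split=> [x xp | X m Xp] /=.
  rewrite pack_evalA; apply: (epsilon_spec _ (fun a : AA N => eqom (rho x) (existT AA N a))).
  exact: rho_at_mono (leq_addr _ _) (Hv x xp).
apply: (epsilon_spec _ (fun Rk => represents Rk (sigma m X))).
exact: (sigma_at_mono _ _ (X, m) (leq_addl _ _) (Hr _ Xp)).
Qed.

(* [e0 j] is a counterexample to [phi] in [B j] whenever there is one. *)
Lemma exists_env_full_models phi :
  exists e0 : forall j, Env j, forall j, satB (e0 j) phi <-> full_models (B j) phi.
Proof.
have [e0 e0P] := choice_section (fun j => ((fun _ => dom_pt (B j)), (fun m X _ => True)) : Env j)
  (fun j ev => ~ satB ev phi).
exists e0 => j; split=> [sat_j | full_j]; last exact: full_j.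
apply: NNPP => /not_all_ex_not [r /not_all_ex_not [s nsat]]; apply: e0P sat_j.
by exists (r, s) => sat_rs; apply: nsat.
Qed.

Lemma lambda_models_of_full phi : G (fun j => full_models (B j) phi) -> lambda_models B G F phi.
Proof.
move=> G_full rho sigma adm; have [N [e rep]] := exists_env_represents rho phi adm.
apply/(los_formula rep); move/(inH_jof N): G_full.
by apply: (uf_up (ufH N)) => kk full_kk; exact: full_kk.
Qed.

Lemma full_of_lambda_models phi : lambda_models B G F phi -> G (fun j => full_models (B j) phi).
Proof.
move=> lam_phi; have [e0 e0E] := exists_env_full_models phi.
pose rho x := existT AA 0 (fun j => (e0 j).1 x).
pose sigma m X := limit_rel (N := 0) (fun j => (e0 j).2 m X).
have rep : env_represents (N := 0) e0 rho sigma phi.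
  by split=> [x _ | X m _]; [exact: eqom_refl | exact: limit_rel_represents].
apply: (uf_iff HG e0E).1.
exact: (los_formula rep).1 (lam_phi rho sigma (fun m X => Upsilon_lim_limit_rel _)).
Qed.

End Chain.

Theorem lemma2p17 (tau : signature) (phi : formula tau)
  (J : Type) (B : J -> structure tau) (G : (J -> Prop) -> Prop)
  (I : nat -> Type) (F : forall n : nat, (I n -> Prop) -> Prop) :
  ultrafilter G ->
  (forall n : nat, ultrafilter (F n)) ->
  (G (fun j : J => full_models (B j) phi) <-> lambda_models B G F phi).
Proof.
move=> HG HF; split; [exact: lambda_models_of_full | exact: full_of_lambda_models].
Qed.
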